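(* There is a function $f'$ with $f'(t,k)=O_t(k^t)$ (i.e., for each fixed $t$ there is $C_t$ with $f'(t,k)\le C_t k^t$ for all $k\ge1$) such that every $\mathcal{O}_k$-free graph $G$ with no $K_{t,t}$ subgraph contains a set $X$ of at most $f'(t,k)$ vertices intersecting every banana of $G$.
   Context: All graphs are finite and simple. Two vertex-disjoint subgraphs are independent if there is no edge between them. A graph $G$ is $\mathcal{O}_k$-free if it does not contain $k$ pairwise vertex-disjoint and pairwise independent cycles; equivalently, $G$ has no induced subgraph isomorphic to a disjoint union of $k$ cycles. A banana in $G$ is a pair of distinct vertices together with at least two internally vertex-disjoint paths between them all of whose internal vertices have degree exactly 2 in $G$; a set $X$ intersects the banana if it contains a vertex of the banana (one of the two vertices or an internal vertex of one of these paths). *)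

From mathcomp Require Import all_boot.
Set Implicit Arguments. Unset Strict Implicit. Unset Printing Implicit Defensive.

Section Graphs.
Variables (T : finType) (e : rel T).

Definition simple_graph : Prop := symmetric e /\ irreflexive e.

Definition deg (v : T) : nat := #|[set w | e v w]|.

Definition is_cycle (c : seq T) : Prop := [/\ uniq c, 3 <= size c & cycle e c].

Definition independent (A B : seq T) : Prop :=
  forall u v, u \in A -> v \in B -> ~~ e u v.

Definition has_Ok (k : nat) : Prop :=
  exists cs : 'I_k -> seq T,
    (forall i, is_cycle (cs i)) /\
    (forall i j, i != j -> [disjoint cs i & cs j] /\ independent (cs i) (cs j)).

Definition Ok_free (k : nat) : Prop := ~ has_Ok k.

Definition has_Ktt_subgraph (t : nat) : Prop :=
  exists A B : {set T}, [/\ #|A| = t, #|B| = t, [disjoint A & B] &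
    forall a b, a \in A -> b \in B -> e a b].

Definition is_xy_path (x y : T) (p : seq T) : Prop :=
  path e x (rcons p y) /\ uniq (x :: rcons p y).

Definition is_banana (x y : T) (ps : seq (seq T)) : Prop :=
  [/\ x != y, 2 <= size ps, uniq ps,
      forall p, p \in ps -> is_xy_path x y p /\ (forall v, v \in p -> deg v = 2)
    & forall i j, i < j < size ps -> [disjoint nth [::] ps i & nth [::] ps j]].

Definition hits_banana (X : {set T}) (x y : T) (ps : seq (seq T)) : Prop :=
  x \in X \/ y \in X \/ exists2 p, p \in ps & exists2 v, v \in p & v \in X.

End Graphs.

From mathcomp Require Import all_boot zify.
From Stdlib Require Import Classical ClassicalEpsilon.
Set Implicit Arguments. Unset Strict Implicit. Unset Printing Implicit Defensive.

(* Take a maximal family M of vertex pairs (x, y) with pairwise disjoint ends,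
   each lying on a cycle whose other vertices have degree 2, no two of them on a
   common cycle component.  The ends of M hit every banana: a banana avoiding
   them is such a cycle through its two branch vertices, so it could be added
   to M.  Two pairs with no edge between their ends carry disjoint independent
   cycles, hence stable sets of the "touching" graph on M have fewer than k
   elements.  If |M| were of order k^t, a subfamily of minimum touching degree
   2s with s of order k^(t-1) would exist; picking in each pair an end with s
   neighbours among the ends, a Kovari-Sos-Turan double count produces a
   K_{t,t}.  Hence |M| = O(k^t), and the ends form the required set. *)

(** * Arithmetic *)

Lemma leq_exp2rW m n e : m <= n -> m ^ e <= n ^ e.
Proof. by move=> le_mn; elim: e => // e IH; rewrite !expnS leq_mul. Qed.

Lemma leq_ffact_exp n m : n ^_ m <= n ^ m.
Proof.
elim: m n => // m IH n; rewrite ffactnS expnS leq_mul //.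
exact: leq_trans (IH _) (leq_exp2rW _ (leq_pred n)).
Qed.

Lemma leq_exp_ffact n m : (n - m) ^ m <= n ^_ m.
Proof.
elim: m n => // m IH n; rewrite ffactnS expnS leq_mul ?leq_subr //.
by apply: leq_trans (IH _); apply: leq_exp2rW; lia.
Qed.

(* With s = kst_degree t k, a family of n <= packing_coeff t * k ^ t pairs of
   minimum touching degree 2s violates the double count (kst_degree_large),
   while a stable set of size n / 2s still has k elements (kst_degree_packing). *)
Definition kst_coeff t := t * 8 ^ t.
Definition kst_degree t k := kst_coeff t * k ^ t.-1 + t.
Definition packing_coeff t := 2 * kst_coeff t + 2 * t.

Lemma kst_power_ineq u k n : 0 < k -> n <= packing_coeff u.+1 * k ^ u.+1 ->
  u * 2 ^ u.+1 * n ^ u < (kst_coeff u.+1 * k ^ u) ^ u.+1.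
Proof.
move=> k_gt0 n_le; set A := kst_coeff u.+1.
have A_gt0 : 0 < A by rewrite muln_gt0 expn_gt0.
have le_nu : n ^ u <= 4 ^ u * A ^ u * k ^ (u.+1 * u).
  rewrite expnM -!expnMn; apply: leq_exp2rW; apply: (leq_trans n_le).
  rewrite leq_mul2r /packing_coeff -/A; apply/orP; right.
  have : u.+1 <= A by rewrite /A /kst_coeff leq_pmulr ?expn_gt0.
  lia.
have small : u * 2 ^ u.+1 * 4 ^ u < A.
  have e8 : 2 ^ u.+1 * 4 ^ u = 2 * 8 ^ u by rewrite expnS -mulnA -expnMn.
  rewrite -mulnA e8 /A /kst_coeff expnS; have : 0 < 8 ^ u by rewrite expn_gt0.
  nia.
apply: leq_ltn_trans (leq_mul (leqnn _) le_nu) _.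
have -> : (A * k ^ u) ^ u.+1 = A * A ^ u * k ^ (u.+1 * u).
  by rewrite expnMn -expnM (mulnC u) expnS.
rewrite !mulnA ltn_pmul2r ?expn_gt0 ?k_gt0 //.
by rewrite ltn_pmul2r ?expn_gt0 ?A_gt0.
Qed.

Lemma kst_degree_large t k n : 0 < t -> 0 < k -> 0 < n ->
  n <= packing_coeff t * k ^ t -> (t - 1) * 'C(2 * n, t) < n * 'C(kst_degree t k, t).
Proof.
case: t => // u _ k_gt0 n_gt0 n_le.
rewrite subn1 /= -(ltn_pmul2r (fact_gt0 u.+1)) -!mulnA !bin_ffact.
apply: (@leq_ltn_trans (n * (u * 2 ^ u.+1 * n ^ u))).
  apply: leq_trans (leq_mul (leqnn u) (leq_ffact_exp _ _)) _.
  by rewrite expnMn (expnS n) -!mulnA (mulnCA (2 ^ u.+1)) mulnCA.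
have lt_pow := kst_power_ineq k_gt0 n_le; rewrite -(ltn_pmul2l n_gt0) in lt_pow.
apply: leq_trans lt_pow _.
by rewrite leq_mul2l (leq_trans _ (leq_exp_ffact _ _)) ?orbT // /kst_degree addnK.
Qed.

Lemma kst_degree_packing t k : 0 < t -> 0 < k ->
  2 * kst_degree t k * k <= packing_coeff t * k ^ t.
Proof.
case: t => // u _ k_gt0; rewrite /kst_degree /packing_coeff /= expnS.
have : k <= k * k ^ u by rewrite leq_pmulr ?expn_gt0 ?k_gt0.
nia.
Qed.

Lemma subset_of_card (T : finType) (A : {set T}) n : n <= #|A| ->
  exists2 B : {set T}, B \subset A & #|B| = n.
Proof.
case/card_geqP=> s [s_uniq <- sA]; exists [set x in s]; last first.
  by rewrite cardsE; apply/card_uniqP.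
by apply/subsetP=> x; rewrite inE => /sA.
Qed.

(** * Stable sets in degenerate graphs *)

Section StableSets.
Variables (P : finType) (adj : rel P).
Hypothesis adj_sym : symmetric adj.

Definition stable (I : {set P}) := {in I &, forall p q, p != q -> ~~ adj p q}.

Definition degree_in (S : {set P}) p := #|[set q in S | (q != p) && adj p q]|.

Lemma degenerate_stable d (S : {set P}) : 0 < d ->
  (forall S' : {set P}, S' \subset S -> S' != set0 ->
     exists2 p, p \in S' & degree_in S' p < d) ->
  exists I : {set P}, [/\ I \subset S, stable I & #|S| <= d * #|I|].
Proof.
move=> d_gt0; have [n] := ubnP #|S|; elim: n S => // n IH S /ltnSE le_Sn low.
have [->|S_n0] := eqVneq S set0.
  by exists set0; split; rewrite ?sub0set ?cards0 // => p q; rewrite inE.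
have [p pS deg_p] := low S (subxx _) S_n0.
rewrite /degree_in in deg_p; set N := [set q in S | (q != p) && adj p q] in deg_p.
set S' := S :\: (p |: N).
have sS'S : S' \subset S by apply: subsetDl.
have pS' : p \notin S' by rewrite !inE eqxx.
have [I [sIS' stI le_S'I]] :
    exists I : {set P}, [/\ I \subset S', stable I & #|S'| <= d * #|I|].
  apply: IH => [|S2 sS2 S2_n0]; last exact: low (subset_trans sS2 sS'S) S2_n0.
  by apply: leq_trans le_Sn; apply/proper_card/properP; split => //; exists p.
have pI : p \notin I by apply: contra pS'; apply: (subsetP sIS').
have p_nadj q : q \in I -> ~~ adj p q.
  move/(subsetP sIS'); rewrite !inE negb_or => /andP[/andP[qp]].
  by rewrite qp /= => + qS; rewrite qS.
exists (p |: I); split.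
- by rewrite subUset sub1set pS (subset_trans sIS').
- move=> a b; rewrite !inE => /predU1P[->|aI] /predU1P[->|bI]; rewrite ?eqxx //.
  + by move=> _; apply: p_nadj.
  + by move=> _; rewrite adj_sym; apply: p_nadj.
  + exact: stI.
- have le_S : #|S| <= #|S'| + #|p |: N|.
    rewrite -(cardsID (p |: N) S) addnC leq_add2l.
    by apply: subset_leq_card; apply: subsetIr.
  move: le_S le_S'I deg_p; rewrite !cardsU1 pI /=; case: (p \in N); lia.
Qed.

End StableSets.

(** * Cycles and bananas *)

Section Graph.
Variables (T : finType) (e : rel T).
Hypotheses (e_sym : symmetric e) (e_irr : irreflexive e).

Let e_connect_sym : connect_sym e := sym_connect_sym e_sym.

Lemma deg2_nbrs v a b w : deg e v = 2 -> a != b -> e v a -> e v b -> e v w ->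
  (w == a) || (w == b).
Proof.
move=> deg_v ab eva evb evw.
have nbrs_v : [set a; b] = [set w | e v w].
  apply/eqP; rewrite eqEcard cards2 ab -[#|_|]/(deg e v) deg_v leqnn andbT.
  by apply/subsetP=> z; rewrite !inE => /orP[]/eqP->.
by move/setP/(_ w): nbrs_v; rewrite !inE evw.
Qed.

Lemma cycle_two_nbrs c v : is_cycle e c -> v \in c ->
  exists a b, [/\ a != b, a \in c, b \in c, e v a & e v b].
Proof.
case=> c_uniq c_size c_cycle /rot_to[i s def_c].
have : uniq (v :: s) /\ cycle e (v :: s) /\ 3 <= size (v :: s).
  by rewrite -def_c rot_uniq rot_cycle size_rot.
have mem_c z : z \in v :: s -> z \in c by rewrite -def_c mem_rot.
case: s mem_c {def_c} => [|a [|a' s]] mem_c [s_uniq [s_cycle]] // _.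
move: s_cycle; rewrite /= rcons_path /= => /and4P[eva _ _ elv].
exists a, (last a' s); split.
- by move: s_uniq => /and4P[_ + _ _]; apply: contraNneq => ->; rewrite mem_last.
- by apply: mem_c; rewrite !inE eqxx orbT.
- by apply: mem_c; rewrite in_cons in_cons mem_last !orbT.
- by [].
- by rewrite e_sym.
Qed.

Lemma cycle_deg2_closed c v w : is_cycle e c -> v \in c -> deg e v = 2 -> e v w ->
  w \in c.
Proof.
move=> cyc_c vc deg_v evw; have [a [b [ab ac bc eva evb]]] := cycle_two_nbrs cyc_c vc.
by case/orP: (deg2_nbrs deg_v ab eva evb evw) => /eqP->.
Qed.

Lemma connect_cycle c u v : is_cycle e c -> u \in c -> v \in c -> connect e u v.
Proof.
case=> _ _; case: c => [|x s] //= /path_connect x_to uc vc.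
have connect_x z : z \in x :: s -> connect e x z.
  by move=> zc; apply: x_to; rewrite in_cons mem_rcons zc orbT.
by apply: connect_trans (connect_x _ vc); rewrite e_connect_sym connect_x.
Qed.

Lemma cycle_of_xy_paths x y p1 p2 : is_xy_path e x y p1 -> is_xy_path e x y p2 ->
  p1 != p2 -> [disjoint p1 & p2] -> is_cycle e (x :: p1 ++ y :: rev p2).
Proof.
move=> [path1 uniq1] [path2 uniq2] p12 dis12; split.
- rewrite -cat_rcons -cat_cons cat_uniq uniq1 rev_uniq /=.
  move: uniq2; rewrite /= mem_rcons in_cons negb_or rcons_uniq.
  move=> /andP[/andP[_ xp2] /andP[yp2 ->]]; rewrite andbT.
  apply/hasPn=> z; rewrite mem_rev => zp2.
  rewrite in_cons mem_rcons in_cons !negb_or (disjointFl dis12 zp2) andbT.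
  by apply/andP; split; [apply: contraNneq xp2 | apply: contraNneq yp2] => <-.
- have : 0 < size p1 + size p2.
    by rewrite lt0n addn_eq0 !size_eq0; apply: contra p12 => /andP[/eqP-> /eqP->].
  by rewrite /= size_cat /= size_rev addnS.
- rewrite /= rcons_cat rcons_cons -cat_rcons cat_path path1 last_rcons /=.
  have := rev_path e x (rcons p2 y); rewrite last_rcons belast_rcons rev_cons => ->.
  by rewrite (@eq_path _ _ e) // => a b /=; rewrite e_sym.
Qed.

Definition banana_cycle x y c := [/\ is_cycle e c, x \in c, y \in c &
  {in c, forall v, v != x -> v != y -> deg e v = 2}].

Lemma banana_has_cycle x y ps : is_banana e x y ps ->
  exists2 c, banana_cycle x y c &
    forall (X : {set T}) v, v \in c -> v \in X -> hits_banana X x y ps.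
Proof.
case=> _ size_ps ps_uniq ps_paths ps_disj.
set p1 := nth [::] ps 0; set p2 := nth [::] ps 1.
have p1_ps : p1 \in ps by apply/mem_nth/(leq_trans _ size_ps).
have p2_ps : p2 \in ps by apply: mem_nth.
have p12 : p1 != p2 by rewrite nth_uniq // (leq_trans _ size_ps).
have [path1 deg1] := ps_paths _ p1_ps; have [path2 deg2] := ps_paths _ p2_ps.
exists (x :: p1 ++ y :: rev p2); first split.
- by apply: cycle_of_xy_paths => //; apply: ps_disj.
- exact: mem_head.
- by rewrite in_cons mem_cat mem_head !orbT.
- move=> v; rewrite in_cons mem_cat in_cons mem_rev.
  by case/or4P=> [/eqP->|/deg1 ? _ _|/eqP->|/deg2 ? _ _]; rewrite ?eqxx.
- move=> X v; rewrite in_cons mem_cat in_cons mem_rev.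
  case/or4P=> [/eqP->|vp|/eqP->|vp] vX; [left|right; right|right; left|right; right] => //.
  + by exists p1 => //; exists v.
  + by exists p2 => //; exists v.
Qed.

(** * Packings of cycle pairs *)

Definition ends (q : T * T) : {set T} := [set q.1; q.2].

Definition touching (p q : T * T) := [exists u in ends p, exists w in ends q, e u w].

Definition deg2_component v := [forall w, connect e v w ==> (deg e w == 2)].

Definition cycle_pair (q : T * T) := exists c, banana_cycle q.1 q.2 c.

(* The last condition forbids two pairs on a common cycle component of [G];
   it is what makes the cycles of distinct pairs disjoint. *)
Definition packing (M : {set T * T}) :=
  {in M, forall q, cycle_pair q} /\
  {in M &, forall p q, p != q ->
     [disjoint ends p & ends q] /\ ~ (deg2_component p.1 /\ connect e p.1 q.1)}.

(* An arbitrary sequence when [q] lies on no such cycle. *)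
Definition pair_cycle (q : T * T) := epsilon (inhabits [::]) (banana_cycle q.1 q.2).

Lemma pair_cycleP q : cycle_pair q -> banana_cycle q.1 q.2 (pair_cycle q).
Proof. exact: epsilon_spec. Qed.

Lemma deg2_pair_cycle q v : cycle_pair q -> v \in pair_cycle q -> v \notin ends q ->
  deg e v = 2.
Proof.
by move=> /pair_cycleP[_ _ _ deg_c] vc; rewrite !inE negb_or => /andP[]; apply: deg_c.
Qed.

Lemma deg2_componentW v w : deg2_component v -> connect e v w -> deg2_component w.
Proof.
move=> /forallP deg_v vw; apply/forallP=> z; apply/implyP=> wz.
exact: implyP (deg_v z) (connect_trans vw wz).
Qed.

Lemma packing_cycles_disjoint M p q : packing M -> p \in M -> q \in M -> p != q ->
  [disjoint pair_cycle p & pair_cycle q].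
Proof.
move=> [pairsM disjM] pM qM pq; have [dis_pq no_comp] := disjM _ _ pM qM pq.
have [cyc_p p1c _ _] := pair_cycleP (pairsM _ pM).
have [cyc_q q1c _ _] := pair_cycleP (pairsM _ qM).
pose Z := [predI pair_cycle p & pair_cycle q].
have deg_Z z : z \in Z -> deg e z = 2.
  case/andP=> zp zq; have [zp_ends|] := boolP (z \in ends p).
    by apply: deg2_pair_cycle (pairsM _ qM) zq _; rewrite (disjointFr dis_pq zp_ends).
  exact: deg2_pair_cycle (pairsM _ pM) zp.
have Z_closed : closed e Z.
  apply: intro_closed => // a b eab /[dup] aZ /andP[ap aq].
  by rewrite inE /= (cycle_deg2_closed cyc_p ap (deg_Z _ aZ) eab)
             (cycle_deg2_closed cyc_q aq (deg_Z _ aZ) eab).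
apply/pred0P=> z; apply/negP=> zZ; apply: no_comp; split.
  apply/forallP=> w; apply/implyP=> p1w; apply/eqP/deg_Z.
  rewrite -(closed_connect Z_closed (_ : connect e z w)) //.
  apply: connect_trans p1w; rewrite e_connect_sym.
  by case/andP: zZ => /(connect_cycle cyc_p p1c).
case/andP: zZ => zp zq.
exact: connect_trans (connect_cycle cyc_p p1c zp) (connect_cycle cyc_q zq q1c).
Qed.

Lemma packing_cycles_independent M p q : packing M -> p \in M -> q \in M -> p != q ->
  ~~ touching p q -> independent e (pair_cycle p) (pair_cycle q).
Proof.
move=> packM pM qM pq no_touch u w up wq; apply/negP=> euw.
have dis := packing_cycles_disjoint packM pM qM pq.
have [cyc_p _ _ _] := pair_cycleP (packM.1 _ pM).
have [cyc_q _ _ _] := pair_cycleP (packM.1 _ qM).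
have [u_ends|u_int] := boolP (u \in ends p); last first.
  have wp := cycle_deg2_closed cyc_p up (deg2_pair_cycle (packM.1 _ pM) up u_int) euw.
  by rewrite (disjointFr dis wp) in wq.
have [w_ends|w_int] := boolP (w \in ends q); last first.
  rewrite e_sym in euw.
  have uq := cycle_deg2_closed cyc_q wq (deg2_pair_cycle (packM.1 _ qM) wq w_int) euw.
  by rewrite (disjointFl dis uq) in up.
by move/negP: no_touch; apply; apply/exists_inP; exists u => //; apply/exists_inP; exists w.
Qed.

Lemma packing_Ok M (I : {set T * T}) : packing M -> I \subset M -> stable touching I ->
  has_Ok e #|I|.
Proof.
move=> packM sIM stI; pose f (i : 'I_#|I|) := enum_val i.
have fM i : f i \in M by apply/(subsetP sIM)/enum_valP.
exists (pair_cycle \o f); split=> [i|i j ij] /=.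
  by case: (pair_cycleP (packM.1 _ (fM i))).
have fij : f i != f j by apply: contra ij => /eqP/enum_val_inj->.
split; first exact: packing_cycles_disjoint packM (fM i) (fM j) fij.
apply: (packing_cycles_independent packM (fM i) (fM j) fij).
exact: stI (enum_valP i) (enum_valP j) fij.
Qed.

Definition endpoints (M : {set T * T}) : {set T} := (fst @: M) :|: (snd @: M).

Lemma card_endpoints (M : {set T * T}) : #|endpoints M| <= 2 * #|M|.
Proof. by rewrite mul2n -addnn (leq_trans (leq_card_setU _ _)) // leq_add ?leq_imset_card. Qed.

Lemma ends_endpoints (M : {set T * T}) q : q \in M -> ends q \subset endpoints M.
Proof.
by move=> qM; apply/subsetP=> v; rewrite !inE => /orP[]/eqP->; rewrite imset_f ?orbT.
Qed.

Definition maximal_packing (M : {set T * T}) :=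
  packing M /\ forall q, q \notin M -> ~ packing (q |: M).

Lemma maximal_packing_exists : exists M, maximal_packing M.
Proof.
suff grow (M : {set T * T}) : packing M -> exists M', maximal_packing M'.
  by apply: (grow set0); split=> [q|p q]; rewrite inE.
have [n] := ubnP #|~: M|; elim: n M => // n IH M /ltnSE le_Mn packM.
have [[q qM packqM]|no_q] := classic (exists2 q, q \notin M & packing (q |: M)).
  apply: IH packqM; apply: leq_trans le_Mn.
  by have := cardsC M; have := cardsC (q |: M); rewrite cardsU1 qM; lia.
by exists M; split=> // q qM packqM; apply: no_q; exists q.
Qed.

Lemma maximal_packing_hits (M : {set T * T}) x y ps :
  maximal_packing M -> is_banana e x y ps ->
  hits_banana (endpoints M) x y ps.
Proof.
move=> [packM maxM] /banana_has_cycle[c cyc_xy hits_c]; have [cyc_c xc _ _] := cyc_xy.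
have [xW|xW] := boolP (x \in endpoints M); first by left.
have [yW|yW] := boolP (y \in endpoints M); first by right; left.
(* Either the component of x is a cycle containing a pair of M, and then it is
   the banana's cycle, or (x, y) can be added to M. *)
have [[q qM [comp_x xq]]|no_q] :=
  classic (exists2 q, q \in M & deg2_component x /\ connect e x q.1).
  apply: (hits_c _ q.1); last by apply/(subsetP (ends_endpoints qM)); rewrite !inE eqxx.
  rewrite -(closed_connect _ xq) //; apply: intro_closed => // a b eab ac.
  apply: (cycle_deg2_closed cyc_c ac _ eab); apply/eqP.
  exact: implyP (forallP comp_x a) (connect_cycle cyc_c xc ac).
have xyM : (x, y) \notin M by apply: contra xW => xyM; rewrite inE (imset_f fst xyM).
exfalso; apply: (maxM _ xyM); split.
  by move=> q /setU1P[->|/packM.1] //; exists c.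
have ends_xy q : q \in M -> [disjoint ends (x, y) & ends q].
  move=> qM; rewrite disjoint_sym disjoint_subset; apply/subsetP=> z zq.
  have zW := subsetP (ends_endpoints qM) _ zq.
  rewrite !inE /= negb_or; apply/andP.
  by split; [apply: (contraNneq _ xW) | apply: (contraNneq _ yW)] => <-.
move=> p q /setU1P[->|pM] /setU1P[->|qM]; rewrite ?eqxx // => pq.
- by split; [exact: ends_xy | case=> comp_x xq; apply: no_q; exists q].
- split; first by rewrite disjoint_sym ends_xy.
  case=> comp_p px; apply: no_q; exists p => //; split; first exact: deg2_componentW comp_p px.
  by rewrite e_connect_sym.
- exact: packM.2.
Qed.

(** * Counting *)

Lemma card_common_nbrs_lt t (A : {set T}) : ~ has_Ktt_subgraph e t -> #|A| = t ->
  #|[set u | A \subset [set w | e u w]]| < t.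
Proof.
move=> noK cardA; rewrite ltnNge; apply/negP=> /subset_of_card[B sB cardB].
apply: noK; exists A, B; split=> //.
  rewrite -setI_eq0; apply/eqP/setP=> v; rewrite !inE.
  apply/negP=> /andP[vA /(subsetP sB)]; rewrite inE => /subsetP/(_ v vA).
  by rewrite inE e_irr.
move=> a b aA /(subsetP sB); rewrite inE => /subsetP/(_ a aA).
by rewrite inE e_sym.
Qed.

Lemma kst_double_count t s (U W : {set T}) : ~ has_Ktt_subgraph e t ->
  {in U, forall u, s <= #|[set w in W | e u w]|} ->
  #|U| * 'C(s, t) <= (t - 1) * 'C(#|W|, t).
Proof.
move=> noK deg_U; set F := [set A : {set T} | A \subset W & #|A| == t].
have lower u : u \in U -> 'C(s, t) <= \sum_(A in F) (A \subset [set w | e u w] : nat).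
  move=> uU; rewrite -big_mkcondr sum1_card.
  apply: leq_trans (leq_bin2l _ (deg_U u uU)) _; rewrite -cards_draws.
  apply: subset_leq_card; apply/subsetP=> A; rewrite !inE => /andP[sA cardA].
  rewrite unfold_in /= inE cardA andbT.
  by apply/andP; split; apply: subset_trans sA _; apply/subsetP=> w; rewrite !inE => /andP[].
have upper A : A \in F -> \sum_(u in U) (A \subset [set w | e u w] : nat) <= t - 1.
  rewrite inE => /andP[_ /eqP cardA]; rewrite -big_mkcondr sum1_card.
  have := card_common_nbrs_lt noK cardA.
  set common := [set u | A \subset [set w | e u w]].
  move=> lt_t; apply: leq_trans (subset_leq_card (_ : _ \subset common)) _.
    by apply/subsetP=> u; rewrite unfold_in /= inE => /andP[].
  lia.
rewrite -sum_nat_const.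
apply: (@leq_trans (\sum_(u in U) \sum_(A in F) (A \subset [set w | e u w] : nat))).
  exact: leq_sum.
rewrite exchange_big -cards_draws mulnC -sum_nat_const; exact: leq_sum.
Qed.

Lemma touching_sym : symmetric touching.
Proof.
suff touch_sym p q : touching p q -> touching q p.
  by move=> p q; apply/idP/idP; apply: touch_sym.
case/exists_inP=> u up /exists_inP[w wq euw].
by apply/exists_inP; exists w => //; apply/exists_inP; exists u; rewrite // e_sym.
Qed.

Section TouchingPairs.
Variables (s : nat) (S : {set T * T}).
Hypothesis S_disjoint : {in S &, forall p q, p != q -> [disjoint ends p & ends q]}.

Let W := endpoints S.
Let NW u := [set w in W | e u w].

Lemma ends_inj p q w : p \in S -> q \in S -> w \in ends p -> w \in ends q -> p = q.
Proof.
move=> pS qS wp wq; apply/eqP; apply: contraLR wp => pq.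
by rewrite (disjointFl (S_disjoint pS qS pq) wq).
Qed.

Lemma touching_degree_split p : p \in S ->
  degree_in touching S p <= #|NW p.1| + #|NW p.2|.
Proof.
move=> pS; set N := [set q in S | (q != p) && touching p q].
(* Charge each pair touching p to one of its ends adjacent to p. *)
pose g q := odflt q.1 [pick w in ends q | e p.1 w || e p.2 w].
have gP q : q \in N -> g q \in ends q /\ (e p.1 (g q) || e p.2 (g q)).
  rewrite inE => /and3P[_ _ /exists_inP[u up /exists_inP[w wq euw]]].
  rewrite /g; case: pickP => [w' /andP[]//|none].
  by move: (none w) up; rewrite wq !inE /= => + /orP[]/eqP uE; rewrite -uE euw ?orbT.
have g_inj : {in N &, injective g}.
  move=> a b aN bN gab; have [ga _] := gP _ aN; have [gb _] := gP _ bN.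
  move: aN bN; rewrite !inE => /andP[aS _] /andP[bS _].
  by apply: (ends_inj aS bS ga); rewrite gab.
rewrite /degree_in -/N -(card_in_imset g_inj); apply: leq_trans (leq_card_setU _ _).
apply: subset_leq_card; apply/subsetP=> w /imsetP[q qN ->].
have [gq eg] := gP _ qN; have qS : q \in S by move: qN; rewrite inE => /andP[].
by move: (subsetP (ends_endpoints qS) _ gq); rewrite !inE => ->.
Qed.

Let heavy_end p := if s <= #|NW p.1| then p.1 else p.2.

Lemma heavy_endP p : p \in S -> 2 * s <= degree_in touching S p ->
  heavy_end p \in ends p /\ s <= #|NW (heavy_end p)|.
Proof.
move=> pS; move/leq_trans/(_ (touching_degree_split pS)).
by rewrite /heavy_end !inE; case: ifP => [|/negbT]; rewrite eqxx ?orbT //; lia.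
Qed.

Lemma touching_dense_count t : ~ has_Ktt_subgraph e t ->
  {in S, forall p, 2 * s <= degree_in touching S p} ->
  #|S| * 'C(s, t) <= (t - 1) * 'C(2 * #|S|, t).
Proof.
move=> noK dense_S.
have heavy_inj : {in S &, injective heavy_end}.
  move=> p q pS qS hpq; have [hp _] := heavy_endP pS (dense_S p pS).
  have [hq _] := heavy_endP qS (dense_S q qS).
  by apply: (ends_inj pS qS hp); rewrite hpq.
rewrite -(card_in_imset heavy_inj).
apply: leq_trans (kst_double_count noK (W := W) _) _.
  by move=> _ /imsetP[p pS ->]; case: (heavy_endP pS (dense_S p pS)).
by rewrite leq_mul2l leq_bin2l ?orbT // (card_in_imset heavy_inj) card_endpoints.
Qed.

End TouchingPairs.

Lemma packing_low_touching_degree t k (S : {set T * T}) :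
  ~ has_Ktt_subgraph e t -> 0 < t -> 0 < k ->
  {in S &, forall p q, p != q -> [disjoint ends p & ends q]} ->
  S != set0 -> #|S| <= packing_coeff t * k ^ t ->
  exists2 p, p \in S & degree_in touching S p < 2 * kst_degree t k.
Proof.
move=> noK t_gt0 k_gt0 S_disjoint S_n0 le_S; apply/exists_inP.
apply: contraTT isT => /exists_inPn sparse_S.
have dense_S : {in S, forall p, 2 * kst_degree t k <= degree_in touching S p}.
  by move=> p /sparse_S; rewrite -leqNgt.
have := touching_dense_count S_disjoint noK dense_S.
have := kst_degree_large t_gt0 k_gt0 _ le_S; rewrite card_gt0 S_n0; lia.
Qed.

Lemma card_packing_lt t k (M : {set T * T}) :
  ~ has_Ktt_subgraph e t -> Ok_free e k -> 0 < t -> 0 < k -> packing M ->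
  #|M| < packing_coeff t * k ^ t.
Proof.
move=> noK Ok_freek t_gt0 k_gt0 packM; rewrite ltnNge; apply/negP.
case/subset_of_card=> M0 sM0M cardM0; set s := kst_degree t k.
have s2_gt0 : 0 < 2 * s by rewrite /s /kst_degree muln_gt0 addn_gt0 t_gt0 orbT.
have [I [sIM0 stI le_M0I]] : exists I : {set T * T},
    [/\ I \subset M0, stable touching I & #|M0| <= 2 * s * #|I|].
  apply: (degenerate_stable touching_sym s2_gt0) => S sSM0 S_n0.
  have sSM := subset_trans sSM0 sM0M.
  apply: packing_low_touching_degree noK t_gt0 k_gt0 _ S_n0 _.
    by move=> p q pS qS pq; case: (packM.2 p q (subsetP sSM p pS) (subsetP sSM q qS) pq).
  by rewrite -cardM0 subset_leq_card.
have /subset_of_card[J sJI cardJ] : k <= #|I|.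
  rewrite -(leq_pmul2l s2_gt0); apply: leq_trans le_M0I.
  by rewrite cardM0 kst_degree_packing.
apply: Ok_freek; rewrite -cardJ; apply: (packing_Ok packM).
  exact: subset_trans sJI (subset_trans sIM0 sM0M).
by move=> p q /(subsetP sJI) pI /(subsetP sJI) qI; apply: stI.
Qed.

End Graph.

Lemma has_Ktt_subgraph0 (T : finType) (e : rel T) : has_Ktt_subgraph e 0.
Proof.
exists set0, set0; split; rewrite ?cards0 //; last by move=> a b; rewrite inE.
by apply/pred0P => x; rewrite !inE.
Qed.

Lemma has_Ok0 (T : finType) (e : rel T) : has_Ok e 0.
Proof. by exists (fun=> [::]); split; case. Qed.

Theorem mainTheorem8 :
  exists f' : nat -> nat -> nat,
    (forall t : nat, exists C : nat, forall k : nat, 1 <= k -> f' t k <= C * k ^ t) /\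
    (forall (t k : nat) (T : finType) (e : rel T),
        simple_graph e -> Ok_free e k -> ~ has_Ktt_subgraph e t ->
        exists X : {set T}, #|X| <= f' t k /\
          (forall (x y : T) (ps : seq (seq T)), is_banana e x y ps -> hits_banana X x y ps)).
Proof.
exists (fun t k => 2 * packing_coeff t * k ^ t); split=> [t|t k T e [e_sym e_irr] Ok_freek noK].
  by exists (2 * packing_coeff t).
have t_gt0 : 0 < t by case: t noK => // /(_ (has_Ktt_subgraph0 e)).
have k_gt0 : 0 < k by case: k Ok_freek => // /(_ (has_Ok0 e)).
have [M maxM] := maximal_packing_exists e.
exists (endpoints M); split; last by move=> x y ps; apply: maximal_packing_hits.
rewrite -mulnA; apply: leq_trans (card_endpoints M) _; rewrite leq_mul2l ltnW ?orbT //.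
exact: card_packing_lt maxM.1.
Qed.

Print Assumptions mainTheorem8.
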